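(* For every integer $n\geqslant1$, \[ \sum_{k=0}^{n-1}(-1)^{n+k}\frac{(2n+1)(2k+1)}{(n-k)^{2}(n+k+1)^{2}} =-\frac{\pi^{2}}{12}+\psi_{1}(2n+1)-\frac{1}{2}\psi_{1}(n+1). \]
   Context: $\psi_1$ is the trigamma function, $\psi_1(z)=\frac{\mathrm{d}^2}{\mathrm{d}z^2}\ln\Gamma(z)$. *)

From Stdlib Require Import Reals.
From Coquelicot Require Import Coquelicot.
Open Scope R_scope.

Definition Gamma (x : R) : R :=
  RInt_gen (fun t => Rpower t (x - 1) * exp (- t))
           (at_right 0) (Rbar_locally p_infty).

Definition trigamma (z : R) : R :=
  Derive_n (fun y => ln (Gamma y)) 2 z.

(* The summand is [(-1)^(n+k) (1/(n-k)^2 - 1/(n+k+1)^2)], so the left-hand side is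
   [sum_(j=1)^(2n) (-1)^j / j^2 = - H(2n) + H(n) / 2], where [H(m) = sum_(j=1)^m 1 / j^2].
   For [x > 1], [psi_1(x) = sum_(k>=0) 1 / (x+k)^2], hence [psi_1(m+1) = pi^2/6 - H(m)] by
   Basel's identity, which follows from Matsuoka's telescoping identity
   [1/(N+1)^2 = 2 (B_N/A_N - B_(N+1)/A_(N+1))] for [A_N = int_0^(pi/2) cos^(2N) x dx] and
   [B_N = int_0^(pi/2) x^2 cos^(2N) x dx] ([wallis] and [wallis_x2] below).
   The series for [psi_1] comes from Gauss's limit [Gamma x = lim N^x N! / (x (x+1) ... (x+N))],
   obtained from Euler's integral as the limit of [int_0^N t^(x-1) (1 - t/N)^N dt].
   Subtracting [int_2^x (x-u) sum_(k<=N) (u+k)^-2 du] from the logarithm of the N-th Gauss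
   quotient leaves a function affine in [x]; in the limit, [ln Gamma] differs from
   [int_2^x (x-u) psi_1(u) du] by an affine function, and its second derivative is [psi_1]. *)

From Stdlib Require Import Reals Lra Lia Factorial.
From Coquelicot Require Import Coquelicot.
Open Scope R_scope.

Ltac continuity_by_derive :=
  apply (ex_derive_continuous (K := R_AbsRing) (V := R_NormedModule)); auto_derive.

Lemma minus_R (a b : R) : minus a b = a - b.
Proof. reflexivity. Qed.

Lemma locally_R (t d : R) {P : R -> Prop} :
  0 < d -> (forall y, Rabs (y - t) < d -> P y) -> locally t P.
Proof. intros Hd HP. exists (mkposreal d Hd). intros y Hy. apply HP, Hy. Qed.

Lemma ball_R (c e y : R) : ball c e y <-> Rabs (y - c) < e.
Proof. reflexivity. Qed.

Lemma is_RInt_eq_val (f : R -> R) a b l1 l2 :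
  is_RInt f a b l1 -> is_RInt f a b l2 -> l1 = l2.
Proof. intros H1 H2. rewrite <- (is_RInt_unique _ _ _ _ H1). exact (is_RInt_unique _ _ _ _ H2). Qed.

Lemma is_RInt_derive_R (F f : R -> R) a b :
  (forall x, Rmin a b <= x <= Rmax a b -> is_derive F x (f x)) ->
  (forall x, Rmin a b <= x <= Rmax a b -> continuous f x) ->
  is_RInt f a b (F b - F a).
Proof. exact (is_RInt_derive F f a b). Qed.

Lemma is_RInt_continuous_R (f : R -> R) a b :
  (forall x, Rmin a b <= x <= Rmax a b -> continuous f x) -> is_RInt f a b (RInt f a b).
Proof.
  intros Hf. apply (RInt_correct (V := R_CompleteNormedModule)).
  apply (ex_RInt_continuous (V := R_CompleteNormedModule)), Hf.
Qed.

Lemma is_RInt_ext_R (f g : R -> R) a b l :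
  (forall x, Rmin a b < x < Rmax a b -> f x = g x) -> is_RInt f a b l -> is_RInt g a b l.
Proof. exact (is_RInt_ext f g a b l). Qed.

Lemma is_RInt_plus_R (f g : R -> R) a b (If Ig : R) :
  is_RInt f a b If -> is_RInt g a b Ig -> is_RInt (fun x => f x + g x) a b (If + Ig).
Proof. exact (is_RInt_plus f g a b If Ig). Qed.

Lemma is_RInt_lin (f g : R -> R) a b (c d If Ig : R) :
  is_RInt f a b If -> is_RInt g a b Ig ->
  is_RInt (fun x => c * f x + d * g x) a b (c * If + d * Ig).
Proof.
  intros Hf Hg.
  exact (is_RInt_plus _ _ _ _ _ _ (is_RInt_scal _ _ _ c _ Hf) (is_RInt_scal _ _ _ d _ Hg)).
Qed.

Lemma segment_pos c x u : 0 < c -> 0 < x -> Rmin c x <= u <= Rmax c x -> 0 < u.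
Proof. intros Hc Hx Hu. pose proof (Rmin_glb_lt c x 0 Hc Hx). lra. Qed.

Lemma abs_RInt_le_segment (f : R -> R) a b M : ex_RInt f a b ->
  (forall t, Rmin a b <= t <= Rmax a b -> Rabs (f t) <= M) ->
  Rabs (RInt f a b) <= Rabs (b - a) * M.
Proof.
  intros Hf Hb. destruct (Rle_dec a b) as [Hab|Hab].
  - rewrite (Rabs_pos_eq (b - a)) by lra. apply abs_RInt_le_const; [exact Hab | exact Hf|].
    intros t Ht. apply Hb. rewrite Rmin_left, Rmax_right; lra.
  - rewrite <- (opp_RInt_swap (V := R_CompleteNormedModule) f b a (ex_RInt_swap _ _ _ Hf)).
    unfold opp; simpl. rewrite Rabs_Ropp, (Rabs_left (b - a)), Ropp_minus_distr by lra.
    apply abs_RInt_le_const; [lra | apply ex_RInt_swap, Hf|].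
    intros t Ht. apply Hb. rewrite Rmin_right, Rmax_left; lra.
Qed.

Lemma is_derive_RInt_pos (h : R -> R) c y : 0 < c -> 0 < y ->
  (forall u, 0 < u -> continuous h u) -> is_derive (fun b => RInt h c b) y (h y).
Proof.
  intros Hc Hy Hh. apply (is_derive_RInt h _ c); [|apply Hh, Hy].
  apply (locally_R y y Hy). intros b Hb. apply Rabs_def2 in Hb.
  apply is_RInt_continuous_R. intros u Hu. apply Hh, (segment_pos c b u Hc); lra.
Qed.

Lemma is_derive_plus_R (f g : R -> R) x df dg :
  is_derive f x df -> is_derive g x dg -> is_derive (fun y => f y + g y) x (df + dg).
Proof. exact (is_derive_plus f g x df dg). Qed.

Lemma is_derive_mult_R (f g : R -> R) x df dg :
  is_derive f x df -> is_derive g x dg ->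
  is_derive (fun y => f y * g y) x (df * g x + f x * dg).
Proof. intros Hf Hg. exact (is_derive_mult f g x df dg Hf Hg Rmult_comm). Qed.

Lemma continuous_mult_R (f g : R -> R) x :
  continuous f x -> continuous g x -> continuous (fun y => f y * g y) x.
Proof. exact (continuous_mult (K := R_AbsRing) f g x). Qed.

Lemma continuous_lin_R (f g : R -> R) (c d x : R) :
  continuous f x -> continuous g x -> continuous (fun y => c * f y + d * g y) x.
Proof.
  intros Hf Hg. apply (continuous_plus (K := R_AbsRing) (V := R_NormedModule) (fun y => c * f y));
    apply (continuous_scal_r (K := R_AbsRing) (V := R_NormedModule)); assumption.
Qed.

Lemma continuous_inv_sq a y : 0 < y + a -> continuous (fun u => / (u + a) ^ 2) y.
Proof.
  intros H. continuity_by_derive.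
  rewrite Rmult_1_r. apply Rmult_integral_contrapositive. split; lra.
Qed.

Lemma is_lim_seq_inv_succ : is_lim_seq (fun n => / (INR n + 1)) 0.
Proof.
  assert (H : is_lim_seq (fun n => INR (S n)) p_infty)
    by (apply -> is_lim_seq_incr_1; apply is_lim_seq_INR).
  apply is_lim_seq_inv in H; [|discriminate].
  apply (is_lim_seq_ext _ _ _ (fun n => f_equal Rinv (S_INR n)) H).
Qed.

Lemma is_lim_seq_rate (u : nat -> R) (l C : R) :
  (forall n, Rabs (u n - l) <= C / (INR n + 1)) -> is_lim_seq u l.
Proof.
  intros Hu.
  assert (Hlim : forall c, is_lim_seq (fun n => l + c * (C / (INR n + 1))) l).
  { intros c.
    assert (H : is_lim_seq (fun n => l + c * (C / (INR n + 1))) (l + c * (C * 0))).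
    { apply is_lim_seq_plus'; [apply is_lim_seq_const|].
      apply (is_lim_seq_scal_l _ c (C * 0)), (is_lim_seq_scal_l _ C 0), is_lim_seq_inv_succ. }
    rewrite !Rmult_0_r, Rplus_0_r in H. exact H. }
  apply (is_lim_seq_le_le (fun n => l + -1 * (C / (INR n + 1))) _
                          (fun n => l + 1 * (C / (INR n + 1)))).
  - intros n. specialize (Hu n). apply Rabs_le_between in Hu. lra.
  - apply Hlim.
  - apply Hlim.
Qed.

Lemma is_lim_seq_bounds (u : nat -> R) (l a b : R) (N : nat) :
  is_lim_seq u l -> (forall n, (N <= n)%nat -> a <= u n <= b) -> a <= l <= b.
Proof.
  intros Hu Hab. split.
  - apply (is_lim_seq_le_loc (fun _ => a) u a l); [|apply is_lim_seq_const | exact Hu].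
    exists N. apply Hab.
  - apply (is_lim_seq_le_loc u (fun _ => b) l b); [|exact Hu | apply is_lim_seq_const].
    exists N. apply Hab.
Qed.

Lemma is_lim_seq_affine (A B : nat -> R) (g : R -> R) (x0 x : R) :
  is_lim_seq (fun n => A n + B n * (x0 - x0)) (g x0) ->
  is_lim_seq (fun n => A n + B n * (x0 + 1 - x0)) (g (x0 + 1)) ->
  is_lim_seq (fun n => A n + B n * (x - x0)) (g x) ->
  g x = g x0 + (g (x0 + 1) - g x0) * (x - x0).
Proof.
  intros H0 H1 Hx.
  apply (is_lim_seq_ext _ A) in H0; [|intros n; ring].
  apply (is_lim_seq_ext _ (fun n => A n + B n)) in H1; [|intros n; ring].
  assert (HB : is_lim_seq B (g (x0 + 1) - g x0)).
  { apply (is_lim_seq_ext (fun n => (A n + B n) - A n)); [intros n; ring|].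
    apply is_lim_seq_minus'; assumption. }
  assert (Hx' : is_lim_seq (fun n => A n + B n * (x - x0))
                           (g x0 + (g (x0 + 1) - g x0) * (x - x0))).
  { apply is_lim_seq_plus'; [exact H0|].
    apply is_lim_seq_mult'; [exact HB | apply is_lim_seq_const]. }
  pose proof (is_lim_seq_unique _ _ Hx) as E. rewrite (is_lim_seq_unique _ _ Hx') in E.
  injection E. auto.
Qed.

Lemma sum_f_R0_lin (f g h : nat -> R) c N :
  sum_f_R0 (fun k => f k - g k + c * h k) N = sum_f_R0 f N - sum_f_R0 g N + c * sum_f_R0 h N.
Proof. induction N as [|N IH]; [reflexivity|]. rewrite !tech5, IH. ring. Qed.

Lemma exp_le_compat x y : x <= y -> exp x <= exp y.
Proof. intros [H | ->]; [left; apply exp_increasing, H | right; reflexivity]. Qed.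

Lemma ln_le_sub_1 y : 0 < y -> ln y <= y - 1.
Proof. intros Hy. pose proof (exp_ineq1_le (ln y)) as H. rewrite exp_ln in H by exact Hy. lra. Qed.

Lemma exp_neg_half_le b : 0 < b -> exp (- b / 2) <= 2 / b.
Proof.
  intros Hb. pose proof (exp_ineq1_le (b / 2)). pose proof (exp_pos (b / 2)).
  replace (- b / 2) with (- (b / 2)) by field. rewrite exp_Ropp.
  apply (Rmult_le_reg_r (exp (b / 2))); [lra|]. rewrite Rinv_l by lra.
  apply (Rmult_le_reg_l b); [lra|]. field_simplify; lra.
Qed.

Lemma exp_mult_INR N y : exp (INR N * y) = exp y ^ N.
Proof.
  induction N as [|N IH]; [rewrite Rmult_0_l; apply exp_0|].
  rewrite S_INR, Rmult_plus_distr_r, exp_plus, IH, Rmult_1_l. simpl. ring.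
Qed.

Lemma bernoulli_ineq N u : 0 <= u <= 1 -> 1 - INR N * u <= (1 - u) ^ N.
Proof.
  intros Hu. induction N as [|N IH]; [simpl; lra|].
  rewrite S_INR. simpl pow. pose proof (pos_INR N).
  apply Rle_trans with ((1 - u) * (1 - INR N * u)); [nra|].
  apply Rmult_le_compat_l; lra.
Qed.

(** * The alternating sum *)

Fixpoint harm2 (m : nat) : R :=
  match m with O => 0 | S p => harm2 p + / (INR p + 1) ^ 2 end.

Fixpoint alt_harm2 (m : nat) : R :=
  match m with O => 0 | S p => alt_harm2 p + (-1) ^ S p / (INR p + 1) ^ 2 end.

Lemma harm2_S p : harm2 (S p) = harm2 p + / (INR p + 1) ^ 2.
Proof. reflexivity. Qed.

Lemma alt_harm2_S p : alt_harm2 (S p) = alt_harm2 p + (-1) ^ S p / (INR p + 1) ^ 2.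
Proof. reflexivity. Qed.

Lemma alt_harm2_double n : alt_harm2 (2 * n) = - harm2 (2 * n) + / 2 * harm2 n.
Proof.
  induction n as [|n IH]; [simpl; lra|].
  replace (2 * S n)%nat with (S (S (2 * n))) by lia.
  rewrite !alt_harm2_S, !harm2_S, IH.
  rewrite <- (tech_pow_Rmult _ (S (2 * n))), <- tech_pow_Rmult, pow_1_even.
  rewrite !S_INR, mult_INR. simpl (INR 2).
  assert (0 <= INR n) by apply pos_INR.
  field; lra.
Qed.

Lemma alt_harm2_sum m :
  alt_harm2 (S m) = sum_f_R0 (fun i => (-1) ^ S i / (INR i + 1) ^ 2) m.
Proof. induction m as [|m IH]; [simpl; ring|]. rewrite alt_harm2_S, IH. reflexivity. Qed.

Lemma alt_harm2_tail m r :
  sum_f_R0 (fun k => (-1) ^ (m + S k) / (INR (m + k) + 1) ^ 2) r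
  = alt_harm2 (m + S r) - alt_harm2 m.
Proof.
  induction r as [|r IH].
  - cbn [sum_f_R0]. rewrite Nat.add_0_r, Nat.add_1_r, alt_harm2_S. ring.
  - rewrite tech5, IH. replace (m + S (S r))%nat with (S (m + S r)) by lia.
    rewrite alt_harm2_S. ring.
Qed.

Lemma partial_fractions x y : x - y <> 0 -> x + y + 1 <> 0 ->
  (2 * x + 1) * (2 * y + 1) / ((x - y) ^ 2 * (x + y + 1) ^ 2)
  = / (x - y) ^ 2 - / (x + y + 1) ^ 2.
Proof. intros. field. split; assumption. Qed.

Lemma finite_sum_alt_harm2 n : (1 <= n)%nat ->
  sum_f_R0 (fun k : nat =>
      (-1) ^ (n + k) * ((2 * INR n + 1) * (2 * INR k + 1))
      / ((INR n - INR k) ^ 2 * (INR n + INR k + 1) ^ 2)) (n - 1)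
  = alt_harm2 (2 * n).
Proof.
  intros hn. destruct n as [|p]; [lia|]. replace (S p - 1)%nat with p by lia.
  rewrite (sum_eq _ (fun k => (-1) ^ S (p - k) / (INR (p - k) + 1) ^ 2
                 + (-1) ^ (S p + S k) / (INR (S p + k) + 1) ^ 2)).
  2:{ intros k Hk.
      assert (Hsign : (-1) ^ (S p + k) = (-1) ^ S (p - k)).
      { replace (S p + k)%nat with (S (p - k) + 2 * k)%nat by lia.
        rewrite pow_add, pow_1_even. ring. }
      assert (Hsign' : (-1) ^ (S p + S k) = - (-1) ^ S (p - k)).
      { rewrite <- plus_n_Sm, <- tech_pow_Rmult, Hsign. ring. }
      assert (0 <= INR k) by apply pos_INR.
      assert (INR k <= INR p) by (apply le_INR; lia).
      rewrite <- Rmult_div_assoc, partial_fractions by (rewrite S_INR; lra).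
      rewrite Hsign, Hsign', minus_INR, plus_INR, S_INR by lia.
      field. split; lra. }
  rewrite sum_plus, (sum_f_R0_skip (fun i => (-1) ^ S i / (INR i + 1) ^ 2)).
  rewrite <- alt_harm2_sum, alt_harm2_tail.
  replace (2 * S p)%nat with (S p + S p)%nat by lia. ring.
Qed.

(** * Basel's identity *)

Lemma sin_ge_third x : 0 <= x <= PI / 2 -> x / 3 <= sin x.
Proof.
  intros Hx. pose proof PI_4.
  assert (Hs := sin_bound x 0 ltac:(lra) ltac:(lra)).
  unfold sin_approx, sin_term in Hs. simpl in Hs. nra.
Qed.

Lemma sin2_cos2_eq x : sin x ^ 2 = 1 - cos x ^ 2.
Proof. pose proof (sin2 x) as H. unfold Rsqr in H. simpl. lra. Qed.

Lemma eq_mod_sin2_cos2 x (a b k : R) : a - b = (sin x ^ 2 + cos x ^ 2 - 1) * k -> a = b.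
Proof. rewrite sin2_cos2_eq. intros H. lra. Qed.

Lemma cos_pow_even_ge0 n x : 0 <= cos x ^ (2 * n).
Proof. rewrite pow_mult. apply pow_le, pow2_ge_0. Qed.

Definition wallis (n : nat) : R := RInt (fun x => cos x ^ (2 * n)) 0 (PI / 2).
Definition wallis_x2 (n : nat) : R := RInt (fun x => x ^ 2 * cos x ^ (2 * n)) 0 (PI / 2).

Lemma is_RInt_wallis n : is_RInt (fun x => cos x ^ (2 * n)) 0 (PI / 2) (wallis n).
Proof. apply is_RInt_continuous_R. intros x _. continuity_by_derive. exact I. Qed.

Lemma is_RInt_wallis_x2 n : is_RInt (fun x => x ^ 2 * cos x ^ (2 * n)) 0 (PI / 2) (wallis_x2 n).
Proof. apply is_RInt_continuous_R. intros x _. continuity_by_derive. exact I. Qed.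

Lemma wallis_S m : (2 * INR m + 2) * wallis (S m) = (2 * INR m + 1) * wallis m.
Proof.
  set (f := fun x => (2 * INR m + 2) * cos x ^ (2 * S m) + - (2 * INR m + 1) * cos x ^ (2 * m)).
  assert (Hval : is_RInt f 0 (PI / 2)
                   ((2 * INR m + 2) * wallis (S m) + - (2 * INR m + 1) * wallis m))
    by (unfold f; apply is_RInt_lin; apply is_RInt_wallis).
  assert (Hprim : is_RInt f 0 (PI / 2)
     (sin (PI / 2) * cos (PI / 2) ^ (2 * m + 1) - sin 0 * cos 0 ^ (2 * m + 1))).
  { apply (is_RInt_derive_R (fun x => sin x * cos x ^ (2 * m + 1))); intros x _.
    - auto_derive; [exact I|]. unfold f.
      replace (2 * S m)%nat with (2 * m + 2)%nat by lia.
      replace (m + (m + 0) + 1)%nat with (2 * m + 1)%nat by lia.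
      replace (pred (2 * m + 1)) with (2 * m)%nat by lia.
      apply (eq_mod_sin2_cos2 x _ _ (- (2 * INR m + 1) * cos x ^ (2 * m))).
      rewrite !pow_add, plus_INR, mult_INR. simpl INR. ring.
    - unfold f. continuity_by_derive. exact I. }
  rewrite cos_PI2, sin_0, pow_i in Hprim by lia.
  pose proof (is_RInt_eq_val _ _ _ _ _ Hval Hprim). lra.
Qed.

Lemma wallis_x2_S m :
  wallis (S m) + 2 * (INR m + 1) ^ 2 * wallis_x2 (S m)
  = (INR m + 1) * (2 * INR m + 1) * wallis_x2 m.
Proof.
  set (f := fun x => 1 * cos x ^ (2 * S m)
                   + 1 * (2 * (INR m + 1) ^ 2 * (x ^ 2 * cos x ^ (2 * S m))
                          + - ((INR m + 1) * (2 * INR m + 1)) * (x ^ 2 * cos x ^ (2 * m)))).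
  assert (Hval : is_RInt f 0 (PI / 2)
     (1 * wallis (S m) + 1 * (2 * (INR m + 1) ^ 2 * wallis_x2 (S m)
                              + - ((INR m + 1) * (2 * INR m + 1)) * wallis_x2 m)))
    by (unfold f; apply is_RInt_lin;
        [apply is_RInt_wallis | apply is_RInt_lin; apply is_RInt_wallis_x2]).
  assert (Hprim : is_RInt f 0 (PI / 2)
     ((PI / 2 * cos (PI / 2) ^ (2 * m + 2)
       + (INR m + 1) * ((PI / 2) ^ 2 * sin (PI / 2) * cos (PI / 2) ^ (2 * m + 1)))
      - (0 * cos 0 ^ (2 * m + 2) + (INR m + 1) * (0 ^ 2 * sin 0 * cos 0 ^ (2 * m + 1))))).
  { apply (is_RInt_derive_R
      (fun x => x * cos x ^ (2 * m + 2) + (INR m + 1) * (x ^ 2 * sin x * cos x ^ (2 * m + 1))));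
      intros x _.
    - auto_derive; [exact I|]. unfold f.
      replace (2 * S m)%nat with (2 * m + 2)%nat by lia.
      replace (m + (m + 0) + 1)%nat with (2 * m + 1)%nat by lia.
      replace (m + (m + 0) + 2)%nat with (2 * m + 2)%nat by lia.
      replace (pred (2 * m + 1)) with (2 * m)%nat by lia.
      replace (pred (2 * m + 2)) with (2 * m + 1)%nat by lia.
      apply (eq_mod_sin2_cos2 x _ _ (- (INR m + 1) * (2 * INR m + 1) * x ^ 2 * cos x ^ (2 * m))).
      rewrite !pow_add, !plus_INR, !mult_INR. simpl INR. ring.
    - unfold f. continuity_by_derive. exact I. }
  rewrite cos_PI2, sin_0, !pow_i in Hprim by lia.
  pose proof (is_RInt_eq_val _ _ _ _ _ Hval Hprim). lra.
Qed.

Lemma wallis_0 : wallis 0 = PI / 2.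
Proof.
  apply is_RInt_unique.
  replace (PI / 2) with (PI / 2 - 0) at 2 by ring.
  apply (is_RInt_derive_R (fun x => x)); intros x _.
  - auto_derive; auto.
  - apply continuous_const.
Qed.

Lemma wallis_x2_0 : wallis_x2 0 = (PI / 2) ^ 3 / 3.
Proof.
  apply is_RInt_unique.
  replace ((PI / 2) ^ 3 / 3) with ((PI / 2) ^ 3 / 3 - 0 ^ 3 / 3) by field.
  apply (is_RInt_derive_R (fun x => x ^ 3 / 3)); intros x _.
  - auto_derive; auto. simpl. field.
  - continuity_by_derive. exact I.
Qed.

Lemma wallis_pos n : 0 < wallis n.
Proof.
  induction n as [|m IH].
  - rewrite wallis_0. pose proof PI_RGT_0. lra.
  - pose proof (wallis_S m). pose proof (pos_INR m).
    apply (Rmult_lt_reg_l (2 * INR m + 2)); [lra|]. nra.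
Qed.

Lemma wallis_x2_bounds n : 0 <= wallis_x2 n <= 9 * (wallis n - wallis (S n)).
Proof.
  pose proof PI_RGT_0.
  assert (Hex : ex_RInt (fun x => x ^ 2 * cos x ^ (2 * n)) 0 (PI / 2))
    by (eexists; apply is_RInt_wallis_x2).
  assert (H9 : is_RInt (fun x => 9 * cos x ^ (2 * n) + -9 * cos x ^ (2 * S n)) 0 (PI / 2)
                 (9 * wallis n + -9 * wallis (S n))) by (apply is_RInt_lin; apply is_RInt_wallis).
  replace (9 * (wallis n - wallis (S n))) with (9 * wallis n + -9 * wallis (S n)) by ring.
  rewrite <- (is_RInt_unique _ _ _ _ H9).
  unfold wallis_x2. split.
  - apply RInt_ge_0; [lra | exact Hex |].
    intros x _. apply Rmult_le_pos; [apply pow2_ge_0 | apply cos_pow_even_ge0].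
  - apply RInt_le; [lra | exact Hex | eexists; exact H9 |].
    intros x Hx.
    replace (2 * S n)%nat with (2 + 2 * n)%nat by lia.
    assert (x ^ 2 <= 9 * (1 - cos x ^ 2)).
    { rewrite <- sin2_cos2_eq. pose proof (sin_ge_third x ltac:(lra)). nra. }
    pose proof (cos_pow_even_ge0 n x). rewrite pow_add. nra.
Qed.

Lemma harm2_wallis N : harm2 N = PI ^ 2 / 6 - 2 * (wallis_x2 N / wallis N).
Proof.
  induction N as [|N IH].
  - rewrite wallis_0, wallis_x2_0. simpl harm2. pose proof PI_RGT_0. field. lra.
  - rewrite harm2_S, IH.
    pose proof (wallis_S N). pose proof (wallis_x2_S N).
    pose proof (wallis_pos N). pose proof (wallis_pos (S N)). pose proof (pos_INR N).
    assert (HA : wallis (S N) = (2 * INR N + 1) / (2 * INR N + 2) * wallis N).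
    { apply (Rmult_eq_reg_l (2 * INR N + 2)); [|lra]. field_simplify; lra. }
    assert (HB : wallis_x2 (S N)
                 = ((INR N + 1) * (2 * INR N + 1) * wallis_x2 N - wallis (S N))
                   / (2 * (INR N + 1) ^ 2)).
    { apply (Rmult_eq_reg_l (2 * (INR N + 1) ^ 2)); [|nra]. field_simplify; nra. }
    rewrite HB, HA. field. lra.
Qed.

Lemma is_lim_seq_harm2 : is_lim_seq harm2 (PI ^ 2 / 6).
Proof.
  apply (is_lim_seq_rate _ _ 9). intros N.
  rewrite harm2_wallis.
  pose proof (wallis_x2_bounds N) as HB. pose proof (wallis_pos N). pose proof (pos_INR N).
  assert (Hdiff : wallis N - wallis (S N) = wallis N / (2 * INR N + 2)).
  { apply (Rmult_eq_reg_l (2 * INR N + 2)); [|lra].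
    rewrite Rmult_minus_distr_l, wallis_S. field. lra. }
  rewrite Hdiff in HB.
  assert (0 <= wallis_x2 N / wallis N <= 9 / (2 * INR N + 2)).
  { split; [apply Rdiv_le_0_compat; lra|].
    apply (Rmult_le_reg_r (wallis N)); [lra|].
    replace (wallis_x2 N / wallis N * wallis N) with (wallis_x2 N) by (field; lra).
    replace (9 / (2 * INR N + 2) * wallis N) with (9 * (wallis N / (2 * INR N + 2)))
      by (field; lra).
    lra. }
  rewrite Rabs_left1 by lra.
  replace (9 / (INR N + 1)) with (2 * (9 / (2 * INR N + 2))) by (field; lra). lra.
Qed.

(* [Rpower t b = exp (b * ln t)] is [1] for [t <= 0], where [ln] is [0]; extending by zero
   instead makes [t ^ b] continuous at [0] for [b > 0]. *)
Definition Rpower0 (t b : R) : R := if Rlt_dec 0 t then Rpower t b else 0.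

Lemma Rpower0_pos t b : 0 < t -> Rpower0 t b = Rpower t b.
Proof. intros H. unfold Rpower0. destruct (Rlt_dec 0 t); [reflexivity | lra]. Qed.

Lemma Rpower0_npos t b : t <= 0 -> Rpower0 t b = 0.
Proof. intros H. unfold Rpower0. destruct (Rlt_dec 0 t); [lra | reflexivity]. Qed.

Lemma Rpower0_ge0 t b : 0 <= Rpower0 t b.
Proof. unfold Rpower0. destruct (Rlt_dec 0 t); [left; apply exp_pos | lra]. Qed.

Lemma Rpower0_plus t a b : Rpower0 t (a + b) = Rpower0 t a * Rpower0 t b.
Proof. unfold Rpower0. destruct (Rlt_dec 0 t); [apply Rpower_plus | ring]. Qed.

Lemma Rpower0_2 t : 0 <= t -> Rpower0 t 2 = t ^ 2.
Proof.
  intros Ht. destruct (Req_dec t 0) as [->|Hne].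
  - rewrite Rpower0_npos by lra. ring.
  - rewrite Rpower0_pos by lra. apply (Rpower_pow 2). lra.
Qed.

Lemma Rpower_small b eps : 0 < b -> 0 < eps ->
  exists d, 0 < d /\ forall t, 0 < t < d -> Rpower t b < eps.
Proof.
  intros Hb He. exists (exp (ln eps / b)). split; [apply exp_pos|].
  intros t [Ht0 Htd]. unfold Rpower. rewrite <- (exp_ln eps He).
  apply exp_increasing.
  assert (Hlt : ln t < ln eps / b) by (rewrite <- (ln_exp (ln eps / b)); apply ln_increasing; lra).
  apply (Rmult_lt_compat_l b) in Hlt; [|lra].
  replace (b * (ln eps / b)) with (ln eps) in Hlt by (field; lra). lra.
Qed.

Lemma Rpower0_continuous b t : 0 < b -> continuous (fun t => Rpower0 t b) t.
Proof.
  intros Hb. destruct (Rlt_le_dec 0 t) as [Ht|Ht].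
  - apply (continuous_ext_loc _ (fun y => Rpower y b)).
    + apply (locally_R t t); [exact Ht|]. intros y Hy.
      apply Rabs_def2 in Hy. symmetry. apply Rpower0_pos. lra.
    + apply (ex_derive_continuous (K := R_AbsRing) (V := R_NormedModule)).
      exists (b * Rpower t (b - 1)). apply is_derive_Reals, derivable_pt_lim_power, Ht.
  - apply filterlim_locally. intros eps.
    destruct (Rpower_small b eps Hb (cond_pos eps)) as [d [Hd Hsmall]].
    apply (locally_R t d Hd). intros y Hy. apply Rabs_def2 in Hy.
    apply ball_R. rewrite (Rpower0_npos t b Ht), Rminus_0_r.
    unfold Rpower0. destruct (Rlt_dec 0 y).
    + rewrite Rabs_pos_eq by (left; apply exp_pos). apply Hsmall. lra.
    + rewrite Rabs_R0. apply cond_pos.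
Qed.

Lemma Rpower0_derive b t : 1 < b ->
  is_derive (fun t => Rpower0 t b) t (b * Rpower0 t (b - 1)).
Proof.
  intros Hb. destruct (Rlt_le_dec 0 t) as [Ht|Ht].
  - rewrite Rpower0_pos by exact Ht.
    apply (is_derive_ext_loc (fun y => Rpower y b)).
    + apply (locally_R t t); [exact Ht|]. intros y Hy.
      apply Rabs_def2 in Hy. symmetry. apply Rpower0_pos. lra.
    + apply is_derive_Reals, derivable_pt_lim_power, Ht.
  - rewrite Rpower0_npos, Rmult_0_r by exact Ht.
    apply is_derive_Reals. intros eps Heps.
    destruct (Rpower_small (b - 1) eps ltac:(lra) Heps) as [d [Hd Hsmall]].
    exists (mkposreal d Hd). intros h Hh0 Hh. simpl in Hh.
    rewrite Rminus_0_r, (Rpower0_npos t b Ht), Rminus_0_r.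
    unfold Rpower0. destruct (Rlt_dec 0 (t + h)) as [Hth|Hth].
    + replace (Rpower (t + h) b / h) with (Rpower (t + h) (b - 1) * ((t + h) / h)).
      2:{ replace b with ((b - 1) + 1) at 2 by ring.
          rewrite Rpower_plus, Rpower_1 by lra. field. exact Hh0. }
      assert (Hq : 0 < (t + h) / h <= 1).
      { assert (0 < h) by lra. split; [apply Rdiv_lt_0_compat; lra|].
        apply (Rmult_le_reg_r h); [lra|]. field_simplify; lra. }
      assert (Hp : 0 < Rpower (t + h) (b - 1)) by apply exp_pos.
      assert (Hs : Rpower (t + h) (b - 1) < eps) by (apply Hsmall; apply Rabs_def2 in Hh; lra).
      rewrite Rabs_pos_eq by nra. nra.
    + unfold Rdiv. rewrite Rmult_0_l, Rabs_R0. exact Heps.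
Qed.

Lemma continuous_Rpower0_poly b T n t : 0 < b ->
  continuous (fun t => Rpower0 t b * (1 - t / T) ^ n) t.
Proof.
  intros Hb. apply continuous_mult_R; [apply Rpower0_continuous, Hb|].
  continuity_by_derive. exact I.
Qed.

(** * Euler's integral *)

Lemma is_RInt_exp_half a b :
  is_RInt (fun t => exp (- t / 2)) a b (2 * (exp (- a / 2) - exp (- b / 2))).
Proof.
  replace (2 * (exp (- a / 2) - exp (- b / 2)))
    with (- 2 * exp (- b / 2) - - 2 * exp (- a / 2)) by ring.
  apply (is_RInt_derive_R (fun t => - 2 * exp (- t / 2))); intros t _.
  - auto_derive; [exact I|]. unfold Rdiv. field.
  - continuity_by_derive. exact I.
Qed.

Definition gamma_kernel (x t : R) : R := Rpower0 t (x - 1) * exp (- t).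

Definition gamma_trunc (x b : R) : R := RInt (gamma_kernel x) 0 b.

(* the maximum of [t ^ (x-1) * exp (- t / 2)], attained at [t = 2 (x-1)] *)
Definition gamma_kernel_const (x : R) : R := exp ((x - 1) * (ln (2 * (x - 1)) - 1)).

Lemma gamma_kernel_ge0 x t : 0 <= gamma_kernel x t.
Proof. apply Rmult_le_pos; [apply Rpower0_ge0 | left; apply exp_pos]. Qed.

Lemma gamma_kernel_continuous x t : 1 < x -> continuous (gamma_kernel x) t.
Proof.
  intros Hx. apply (continuous_mult_R (fun t => Rpower0 t (x - 1)) (fun t => exp (- t))).
  - apply Rpower0_continuous. lra.
  - continuity_by_derive. exact I.
Qed.

Lemma gamma_kernel_le x t : 1 < x ->
  gamma_kernel x t <= gamma_kernel_const x * exp (- t / 2).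
Proof.
  intros Hx. unfold gamma_kernel, gamma_kernel_const. set (s := x - 1).
  assert (Hs : 0 < s) by (unfold s; lra).
  destruct (Rlt_le_dec 0 t) as [Ht|Ht].
  - rewrite Rpower0_pos by exact Ht. unfold Rpower. rewrite <- !exp_plus.
    apply exp_le_compat.
    assert (Hl := ln_le_sub_1 (t / (2 * s)) ltac:(apply Rdiv_lt_0_compat; lra)).
    rewrite ln_div in Hl by lra.
    apply (Rmult_le_compat_l s) in Hl; [|lra].
    replace (s * (t / (2 * s) - 1)) with (t / 2 - s) in Hl by (field; lra). lra.
  - rewrite Rpower0_npos, Rmult_0_l by exact Ht.
    left. apply Rmult_lt_0_compat; apply exp_pos.
Qed.

Lemma ex_RInt_gamma_kernel x a b : 1 < x -> ex_RInt (gamma_kernel x) a b.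
Proof.
  intros Hx. apply (ex_RInt_continuous (V := R_CompleteNormedModule)).
  intros t _. apply gamma_kernel_continuous, Hx.
Qed.

Lemma RInt_gamma_kernel_bounds x a b : 1 < x -> a <= b ->
  0 <= RInt (gamma_kernel x) a b
    <= 2 * gamma_kernel_const x * (exp (- a / 2) - exp (- b / 2)).
Proof.
  intros Hx Hab. split.
  - apply RInt_ge_0; [exact Hab | apply ex_RInt_gamma_kernel, Hx |].
    intros t _. apply gamma_kernel_ge0.
  - assert (H := is_RInt_scal _ _ _ (gamma_kernel_const x) _ (is_RInt_exp_half a b)).
    assert (E : RInt (fun t => gamma_kernel_const x * exp (- t / 2)) a b
                = gamma_kernel_const x * (2 * (exp (- a / 2) - exp (- b / 2))))
      by exact (is_RInt_unique _ _ _ _ H).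
    replace (2 * gamma_kernel_const x * (exp (- a / 2) - exp (- b / 2)))
      with (gamma_kernel_const x * (2 * (exp (- a / 2) - exp (- b / 2)))) by ring.
    rewrite <- E.
    apply RInt_le; [exact Hab | apply ex_RInt_gamma_kernel, Hx | eexists; exact H |].
    intros t _. apply gamma_kernel_le, Hx.
Qed.

Lemma gamma_trunc_Chasles x a b : 1 < x ->
  gamma_trunc x b - gamma_trunc x a = RInt (gamma_kernel x) a b.
Proof.
  intros Hx. unfold gamma_trunc.
  rewrite <- (RInt_Chasles (V := R_CompleteNormedModule) (gamma_kernel x) 0 a b)
    by apply ex_RInt_gamma_kernel, Hx.
  unfold plus; simpl. ring.
Qed.

Lemma is_derive_gamma_trunc x b : 1 < x -> is_derive (gamma_trunc x) b (gamma_kernel x b).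
Proof.
  intros Hx. apply (is_derive_RInt _ _ 0); [|apply gamma_kernel_continuous, Hx].
  apply filter_forall. intros c.
  apply (RInt_correct (V := R_CompleteNormedModule)), ex_RInt_gamma_kernel, Hx.
Qed.

Lemma gamma_trunc_0 x : gamma_trunc x 0 = 0.
Proof. exact (RInt_point (V := R_CompleteNormedModule) 0 _). Qed.

Lemma gamma_trunc_bounds x b : 1 < x -> 0 <= b -> 0 <= gamma_trunc x b <= 2 * gamma_kernel_const x.
Proof.
  intros Hx Hb. pose proof (RInt_gamma_kernel_bounds x 0 b Hx Hb) as H.
  rewrite <- gamma_trunc_Chasles, gamma_trunc_0 in H by exact Hx.
  replace (- 0 / 2) with 0 in H by field. rewrite exp_0 in H.
  pose proof (exp_pos (- b / 2)). assert (0 < gamma_kernel_const x) by apply exp_pos. nra.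
Qed.

Definition gamma_lim (x : R) : R := real (Lim_seq (fun n => gamma_trunc x (INR n))).

Lemma is_lim_seq_gamma_trunc x : 1 < x ->
  is_lim_seq (fun n => gamma_trunc x (INR n)) (gamma_lim x).
Proof.
  intros Hx. apply Lim_seq_correct'.
  apply (ex_finite_lim_seq_incr _ (2 * gamma_kernel_const x)); intros n.
  - pose proof (RInt_gamma_kernel_bounds x (INR n) (INR (S n)) Hx ltac:(rewrite S_INR; lra)).
    rewrite <- gamma_trunc_Chasles in H by exact Hx. lra.
  - apply gamma_trunc_bounds; [exact Hx | apply pos_INR].
Qed.

Lemma gamma_lim_tail x b : 1 < x -> 0 < b ->
  0 <= gamma_lim x - gamma_trunc x b <= 4 * gamma_kernel_const x / b.
Proof.
  intros Hx Hb. destruct (INR_unbounded b) as [N HN].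
  assert (HC : 0 < gamma_kernel_const x) by apply exp_pos.
  assert (Hexp : 2 * gamma_kernel_const x * exp (- b / 2) <= 4 * gamma_kernel_const x / b).
  { pose proof (exp_neg_half_le b Hb).
    replace (4 * gamma_kernel_const x / b) with (2 * gamma_kernel_const x * (2 / b)) by (field; lra).
    apply Rmult_le_compat_l; lra. }
  apply (is_lim_seq_bounds (fun n => gamma_trunc x (INR n) - gamma_trunc x b) _ _ _ N).
  - apply is_lim_seq_minus'; [apply is_lim_seq_gamma_trunc, Hx | apply is_lim_seq_const].
  - intros n Hn. assert (Hbn : b <= INR n) by (apply le_INR in Hn; lra).
    rewrite gamma_trunc_Chasles by exact Hx.
    pose proof (RInt_gamma_kernel_bounds x b (INR n) Hx Hbn). pose proof (exp_pos (- INR n / 2)).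
    nra.
Qed.

Lemma filterlim_gamma_trunc_infty x : 1 < x ->
  filterlim (gamma_trunc x) (Rbar_locally p_infty) (locally (gamma_lim x)).
Proof.
  intros Hx. apply filterlim_locally. intros [e He].
  set (C := gamma_kernel_const x). assert (HC : 0 < C) by apply exp_pos.
  exists (4 * C / e). intros b Hb. simpl.
  assert (Hbe : 4 * C < e * b).
  { replace (4 * C) with (e * (4 * C / e)) by (field; lra). apply Rmult_lt_compat_l; lra. }
  assert (Hb0 : 0 < b) by nra.
  pose proof (gamma_lim_tail x b Hx Hb0) as Htail. fold C in Htail.
  assert (Hsmall : 4 * C / b < e).
  { apply (Rmult_lt_reg_r b); [exact Hb0|].
    replace (4 * C / b * b) with (4 * C) by (field; lra). lra. }
  apply ball_R. rewrite Rabs_left1 by lra. lra.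
Qed.

Lemma Gamma_gamma_lim x : 1 < x -> Gamma x = gamma_lim x.
Proof.
  intros Hx.
  assert (Hder : forall y, Derive (gamma_trunc x) y = gamma_kernel x y)
    by (intros y; apply is_derive_unique, is_derive_gamma_trunc, Hx).
  unfold Gamma. apply is_RInt_gen_unique.
  replace (gamma_lim x) with (gamma_lim x - gamma_trunc x 0) by (rewrite gamma_trunc_0; ring).
  apply (is_RInt_gen_ext (Derive (gamma_trunc x))).
  - apply (Filter_prod _ _ _ (fun a => 0 < a) (fun b => 0 < b)).
    + unfold at_right, within. apply filter_forall. auto.
    + exists 0. auto.
    + intros a b Ha Hb y Hy. simpl in Hy.
      rewrite Hder. unfold gamma_kernel. rewrite Rpower0_pos; [reflexivity|].
      destruct (Rle_dec a b); [rewrite Rmin_left in Hy | rewrite Rmin_right in Hy]; lra.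
  - apply is_RInt_gen_Derive.
    + apply filter_forall. intros ab y _. eexists. apply is_derive_gamma_trunc, Hx.
    + apply filter_forall. intros ab y _.
      apply (continuous_ext (gamma_kernel x)); [intros z; symmetry; apply Hder|].
      apply gamma_kernel_continuous, Hx.
    + apply (filterlim_filter_le_1 (F := locally 0)); [apply filter_le_within|].
      apply (ex_derive_continuous (K := R_AbsRing) (V := R_NormedModule)).
      eexists. apply is_derive_gamma_trunc, Hx.
    + apply filterlim_gamma_trunc_infty, Hx.
Qed.

(** * Gauss's limit formula *)

Fixpoint pochhammer (a : R) (n : nat) : R :=
  match n with O => 1 | S m => pochhammer a m * (a + INR m) end.

Lemma pochhammer_S a n : pochhammer a (S n) = pochhammer a n * (a + INR n).
Proof. reflexivity. Qed.

Lemma pochhammer_S_shift a n : pochhammer a (S n) = a * pochhammer (a + 1) n.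
Proof.
  induction n as [|n IH]; [simpl; ring|].
  rewrite pochhammer_S, IH, pochhammer_S, S_INR. ring.
Qed.

Lemma pochhammer_pos a n : 0 < a -> 0 < pochhammer a n.
Proof.
  intros Ha. induction n as [|n IH]; [simpl; lra|].
  rewrite pochhammer_S. pose proof (pos_INR n). apply Rmult_lt_0_compat; lra.
Qed.

Lemma ln_pochhammer a n : 0 < a -> ln (pochhammer a (S n)) = sum_f_R0 (fun k => ln (a + INR k)) n.
Proof.
  intros Ha. induction n as [|n IH]; [simpl; rewrite Rmult_1_l, Rplus_0_r; reflexivity|].
  rewrite pochhammer_S, ln_mult, IH; [reflexivity | apply pochhammer_pos, Ha |].
  pose proof (pos_INR (S n)). lra.
Qed.

(* Integration by parts against [t ^ a (1 - t/T) ^ (n+1) / a], which vanishes at both ends. *)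
Lemma is_RInt_beta_S T n a J : 0 < T -> 1 < a ->
  is_RInt (fun t => Rpower0 t (a + 1 - 1) * (1 - t / T) ^ n) 0 T J ->
  is_RInt (fun t => Rpower0 t (a - 1) * (1 - t / T) ^ S n) 0 T ((INR n + 1) / (a * T) * J).
Proof.
  intros HT Ha HJ. set (c := (INR n + 1) / (a * T)).
  set (f := fun t => 1 * (Rpower0 t (a - 1) * (1 - t / T) ^ S n)
                     + - c * (Rpower0 t (a + 1 - 1) * (1 - t / T) ^ n)).
  set (Iv := RInt (fun t => Rpower0 t (a - 1) * (1 - t / T) ^ S n) 0 T : R).
  assert (HI : is_RInt (fun t => Rpower0 t (a - 1) * (1 - t / T) ^ S n) 0 T Iv)
    by (apply is_RInt_continuous_R; intros t _; apply continuous_Rpower0_poly; lra).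
  assert (Hval : is_RInt f 0 T (1 * Iv + - c * J)) by (apply is_RInt_lin; assumption).
  assert (Hprim : is_RInt f 0 T
      (/ a * (Rpower0 T a * (1 - T / T) ^ S n) - / a * (Rpower0 0 a * (1 - 0 / T) ^ S n))).
  { apply (is_RInt_derive_R (fun t => / a * (Rpower0 t a * (1 - t / T) ^ S n))); intros t _.
    - replace (f t) with (/ a * ((a * Rpower0 t (a - 1)) * (1 - t / T) ^ S n
                                 + Rpower0 t a * (INR (S n) * (- / T) * (1 - t / T) ^ n)))
        by (unfold f, c; replace (a + 1 - 1) with a by ring; rewrite S_INR; field; lra).
      apply is_derive_scal.
      apply (is_derive_mult_R (fun y => Rpower0 y a) (fun y => (1 - y / T) ^ S n));
        [apply Rpower0_derive, Ha|].
      apply (is_derive_pow (fun t => 1 - t / T) (S n)). auto_derive; [exact I|]. field. lra.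
    - apply continuous_lin_R; apply continuous_Rpower0_poly; lra. }
  replace (1 - T / T) with 0 in Hprim by (field; lra).
  rewrite pow_i, (Rpower0_npos 0 a) in Hprim by (lra || lia).
  replace (c * J) with Iv; [exact HI|].
  pose proof (is_RInt_eq_val _ _ _ _ _ Hval Hprim). lra.
Qed.

Lemma is_RInt_beta T n : 0 < T -> forall a, 1 < a ->
  is_RInt (fun t => Rpower0 t (a - 1) * (1 - t / T) ^ n) 0 T
    (Rpower T a * INR (fact n) / pochhammer a (S n)).
Proof.
  intros HT. induction n as [|n IH]; intros a Ha.
  - replace (Rpower T a * INR (fact 0) / pochhammer a 1)
      with (/ a * Rpower0 T a - / a * Rpower0 0 a)
      by (rewrite Rpower0_pos, Rpower0_npos by lra; simpl; field; lra).
    apply (is_RInt_derive_R (fun t => / a * Rpower0 t a)); intros t _.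
    + replace (Rpower0 t (a - 1) * (1 - t / T) ^ 0) with (/ a * (a * Rpower0 t (a - 1)))
        by (simpl; field; lra).
      apply is_derive_scal, Rpower0_derive, Ha.
    + apply continuous_Rpower0_poly. lra.
  - replace (Rpower T a * INR (fact (S n)) / pochhammer a (S (S n)))
      with ((INR n + 1) / (a * T) * (Rpower T (a + 1) * INR (fact n) / pochhammer (a + 1) (S n))).
    + apply is_RInt_beta_S; [exact HT | exact Ha | apply IH; lra].
    + change (fact (S n)) with (S n * fact n)%nat.
      rewrite mult_INR, S_INR, (pochhammer_S_shift a (S n)), Rpower_plus, Rpower_1 by lra.
      pose proof (pochhammer_pos (a + 1) (S n) ltac:(lra)). field. repeat split; lra.
Qed.

(* Lower bound from [1 + y <= exp y]; upper bound from
   [exp t * (1 - t/N)^N >= ((1 + t/N) (1 - t/N))^N >= 1 - t^2/N] (Bernoulli). *)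
Lemma exp_approx_pow N t : (1 <= N)%nat -> 0 <= t <= INR N ->
  0 <= exp (- t) - (1 - t / INR N) ^ N <= t ^ 2 * exp (- t) / INR N.
Proof.
  intros HN Ht. assert (HNpos : 0 < INR N) by (apply lt_0_INR; lia).
  set (u := t / INR N).
  assert (Hu : 0 <= u <= 1).
  { unfold u. split; [apply Rdiv_le_0_compat; lra|].
    apply (Rmult_le_reg_r (INR N)); [lra|]. field_simplify; lra. }
  assert (Et : forall s, exp (s * t) = exp (s * u) ^ N)
    by (intros s; rewrite <- exp_mult_INR; f_equal; unfold u; field; lra).
  assert (Hlow : (1 - u) ^ N <= exp (- t)).
  { replace (- t) with (-1 * t) by ring. rewrite Et. apply pow_incr.
    pose proof (exp_ineq1_le (- 1 * u)). lra. }
  assert (Hup : 1 - t ^ 2 / INR N <= exp t * (1 - u) ^ N).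
  { apply Rle_trans with ((1 + u) ^ N * (1 - u) ^ N).
    - rewrite <- Rpow_mult_distr.
      replace ((1 + u) * (1 - u)) with (1 - u ^ 2) by ring.
      replace (t ^ 2 / INR N) with (INR N * u ^ 2) by (unfold u; field; lra).
      apply bernoulli_ineq. nra.
    - apply Rmult_le_compat_r; [apply pow_le; lra|].
      replace (exp t) with (exp (1 * t)) by (rewrite Rmult_1_l; reflexivity).
      rewrite Et. apply pow_incr.
      pose proof (exp_ineq1_le (1 * u)). lra. }
  assert (Hinv : exp (- t) * exp t = 1) by (rewrite <- exp_plus, Rplus_opp_l; apply exp_0).
  pose proof (exp_pos (- t)). pose proof (pow_le (1 - u) N ltac:(lra)).
  split; [lra|].
  apply (Rmult_le_compat_l (exp (- t))) in Hup; [|lra].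
  replace (exp (- t) * (exp t * (1 - u) ^ N)) with ((1 - u) ^ N) in Hup
    by (rewrite <- Rmult_assoc, Hinv; ring).
  replace (t ^ 2 * exp (- t) / INR N) with (exp (- t) * (t ^ 2 / INR N)) by (field; lra).
  nra.
Qed.

Definition gauss_seq (x : R) (N : nat) : R :=
  Rpower (INR N) x * INR (fact N) / pochhammer x (S N).

Lemma gauss_seq_pos x N : 0 < x -> 0 < gauss_seq x N.
Proof.
  intros Hx. unfold gauss_seq. apply Rdiv_lt_0_compat; [|apply pochhammer_pos, Hx].
  apply Rmult_lt_0_compat; [apply exp_pos | apply INR_fact_lt_0].
Qed.

Lemma gamma_trunc_sub_gauss_seq x N : 1 < x -> (1 <= N)%nat ->
  0 <= gamma_trunc x (INR N) - gauss_seq x N <= 2 * gamma_kernel_const (x + 2) / INR N.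
Proof.
  intros Hx HN. set (T := INR N). assert (HT : 0 < T) by (apply lt_0_INR; lia).
  set (h := fun t => Rpower0 t (x - 1) * (exp (- t) - (1 - t / T) ^ N)).
  assert (Hh : is_RInt h 0 T (gamma_trunc x T - gauss_seq x N)).
  { apply (is_RInt_ext (fun t => minus (gamma_kernel x t) (Rpower0 t (x - 1) * (1 - t / T) ^ N))).
    - intros t _. symmetry. apply Rmult_minus_distr_l.
    - rewrite <- minus_R.
      apply (is_RInt_minus (gamma_kernel x) (fun t => Rpower0 t (x - 1) * (1 - t / T) ^ N)).
      + apply (RInt_correct (V := R_CompleteNormedModule)), ex_RInt_gamma_kernel, Hx.
      + exact (is_RInt_beta T N HT x Hx). }
  assert (Hq : is_RInt (fun t => / T * gamma_kernel (x + 2) t) 0 T (/ T * gamma_trunc (x + 2) T))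
    by (apply (is_RInt_scal (gamma_kernel (x + 2))), (RInt_correct (V := R_CompleteNormedModule)),
          ex_RInt_gamma_kernel; lra).
  assert (Hhb : forall t, 0 < t < T -> 0 <= h t <= / T * gamma_kernel (x + 2) t).
  { intros t Ht. unfold h, gamma_kernel.
    replace (x + 2 - 1) with ((x - 1) + 2) by ring.
    rewrite Rpower0_plus, Rpower0_2 by lra.
    pose proof (exp_approx_pow N t HN ltac:(fold T; lra)) as Happrox. fold T in Happrox.
    pose proof (Rpower0_ge0 t (x - 1)).
    split; [apply Rmult_le_pos; lra|].
    replace (/ T * (Rpower0 t (x - 1) * t ^ 2 * exp (- t)))
      with (Rpower0 t (x - 1) * (t ^ 2 * exp (- t) / T)) by (field; lra).
    apply Rmult_le_compat_l; lra. }
  rewrite <- (is_RInt_unique _ _ _ _ Hh). split.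
  - apply RInt_ge_0; [lra | eexists; exact Hh | apply Hhb].
  - apply Rle_trans with (/ T * gamma_trunc (x + 2) T).
    + rewrite <- (is_RInt_unique _ _ _ _ Hq).
      apply RInt_le; [lra | eexists; exact Hh | eexists; exact Hq | apply Hhb].
    + pose proof (gamma_trunc_bounds (x + 2) T ltac:(lra) ltac:(lra)).
      unfold Rdiv. rewrite (Rmult_comm (2 * gamma_kernel_const (x + 2))).
      apply Rmult_le_compat_l; [left; apply Rinv_0_lt_compat, HT | lra].
Qed.

Lemma Gamma_gauss_seq_bounds x N : 1 < x -> (1 <= N)%nat ->
  0 <= Gamma x - gauss_seq x N
    <= (4 * gamma_kernel_const x + 2 * gamma_kernel_const (x + 2)) / INR N.
Proof.
  intros Hx HN. assert (HT : 0 < INR N) by (apply lt_0_INR; lia).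
  pose proof (gamma_lim_tail x (INR N) Hx HT). pose proof (gamma_trunc_sub_gauss_seq x N Hx HN).
  rewrite Gamma_gamma_lim by exact Hx.
  replace ((4 * gamma_kernel_const x + 2 * gamma_kernel_const (x + 2)) / INR N)
    with (4 * gamma_kernel_const x / INR N + 2 * gamma_kernel_const (x + 2) / INR N)
    by (field; lra).
  lra.
Qed.

Lemma ln_gauss_seq x N : 0 < x -> (1 <= N)%nat ->
  ln (gauss_seq x N) = x * ln (INR N) + ln (INR (fact N)) - sum_f_R0 (fun k => ln (x + INR k)) N.
Proof.
  intros Hx HN. unfold gauss_seq.
  assert (HRp : 0 < Rpower (INR N) x) by apply exp_pos.
  pose proof (INR_fact_lt_0 N). pose proof (pochhammer_pos x (S N) Hx).
  rewrite ln_div, ln_mult, ln_pochhammer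
    by first [assumption | apply Rmult_lt_0_compat; assumption].
  unfold Rpower. rewrite ln_exp. ring.
Qed.

Lemma is_lim_seq_ln_gauss_seq x : 1 < x ->
  is_lim_seq (fun n => ln (gauss_seq x (S n))) (ln (Gamma x)).
Proof.
  intros Hx. assert (HG : 0 < Gamma x).
  { pose proof (Gamma_gauss_seq_bounds x 1 Hx (le_n 1)).
    pose proof (gauss_seq_pos x 1 ltac:(lra)). lra. }
  apply (is_lim_seq_continuous ln).
  { apply derivable_continuous_pt. exists (/ Gamma x). apply derivable_pt_lim_ln, HG. }
  apply (is_lim_seq_rate _ _ (4 * gamma_kernel_const x + 2 * gamma_kernel_const (x + 2))).
  intros n. pose proof (Gamma_gauss_seq_bounds x (S n) Hx ltac:(lia)). rewrite S_INR in H.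
  rewrite Rabs_minus_sym, Rabs_pos_eq by lra. lra.
Qed.

(** * The series [sum_k 1 / (u + k) ^ 2] *)

Definition trigamma_sum (u : R) (N : nat) : R := sum_f_R0 (fun k => / (u + INR k) ^ 2) N.

Definition trigamma_series (u : R) : R := real (Lim_seq (trigamma_sum u)).

Lemma trigamma_sum_S u N : trigamma_sum u (S N) = trigamma_sum u N + / (u + INR (S N)) ^ 2.
Proof. reflexivity. Qed.

Lemma trigamma_sum_incr u N : 0 < u -> trigamma_sum u N <= trigamma_sum u (S N).
Proof.
  intros Hu. rewrite trigamma_sum_S. pose proof (pos_INR (S N)).
  assert (0 < / (u + INR (S N)) ^ 2) by (apply Rinv_0_lt_compat, pow_lt; lra). lra.
Qed.

(* telescoping against [1 / (v + k)^2 <= 1 / (v + k - 1) - 1 / (v + k)] *)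
Lemma trigamma_sum_tail u N p : 0 < u ->
  0 <= trigamma_sum u (N + p) - trigamma_sum u N <= / (u + INR N) - / (u + INR (N + p)).
Proof.
  intros Hu. induction p as [|p IH]; [rewrite Nat.add_0_r; lra|].
  rewrite <- plus_n_Sm, trigamma_sum_S, S_INR.
  set (v := u + INR (N + p)) in *.
  assert (Hv : 0 < v) by (unfold v; pose proof (pos_INR (N + p)); lra).
  replace (u + (INR (N + p) + 1)) with (v + 1) by (unfold v; ring).
  assert (0 < / (v + 1) ^ 2) by (apply Rinv_0_lt_compat, pow_lt; lra).
  assert (/ (v + 1) ^ 2 <= / v - / (v + 1)).
  { replace (/ v - / (v + 1)) with (/ (v * (v + 1))) by (field; lra).
    apply Rinv_le_contravar; nra. }
  lra.
Qed.

Lemma is_lim_seq_trigamma_sum u : 0 < u -> is_lim_seq (trigamma_sum u) (trigamma_series u).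
Proof.
  intros Hu. apply Lim_seq_correct'.
  apply (ex_finite_lim_seq_incr _ (trigamma_sum u 0 + / u)).
  { intros n. apply trigamma_sum_incr, Hu. }
  intros n. pose proof (trigamma_sum_tail u 0 n Hu). simpl (0 + n)%nat in H.
  rewrite Rplus_0_r in H.
  assert (0 < / (u + INR n)) by (apply Rinv_0_lt_compat; pose proof (pos_INR n); lra). lra.
Qed.

Lemma trigamma_series_tail u N : 0 < u ->
  0 <= trigamma_series u - trigamma_sum u N <= / (u + INR N).
Proof.
  intros Hu.
  apply (is_lim_seq_bounds (fun p => trigamma_sum u (N + p) - trigamma_sum u N) _ _ _ 0).
  - apply is_lim_seq_minus'; [|apply is_lim_seq_const].
    apply (is_lim_seq_ext (fun p => trigamma_sum u (p + N)));
      [intros p; rewrite Nat.add_comm; reflexivity|].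
    apply is_lim_seq_incr_n, is_lim_seq_trigamma_sum, Hu.
  - intros p _. pose proof (trigamma_sum_tail u N p Hu).
    assert (0 < / (u + INR (N + p)))
      by (apply Rinv_0_lt_compat; pose proof (pos_INR (N + p)); lra).
    lra.
Qed.

Lemma trigamma_sum_continuous N y : 0 < y -> continuous (fun u => trigamma_sum u N) y.
Proof.
  intros Hy. induction N as [|N IH].
  - apply continuous_inv_sq. simpl. lra.
  - apply (continuous_ext (fun u => trigamma_sum u N + / (u + INR (S N)) ^ 2));
      [intros u; symmetry; apply trigamma_sum_S|].
    apply (continuous_plus (K := R_AbsRing) (V := R_NormedModule)); [exact IH|].
    apply continuous_inv_sq. pose proof (pos_INR (S N)). lra.
Qed.

(* the partial sums converge uniformly on [(0, +oo)], with error at most [1 / N] *)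
Lemma trigamma_series_continuous y : 0 < y -> continuous trigamma_series y.
Proof.
  intros Hy. apply continuity_pt_filterlim.
  apply (CVU_cont_open (fun N u => trigamma_sum u N) (fun u => 0 < u) (open_gt 0)); [| |exact Hy].
  - intros eps. destruct (INR_unbounded (/ eps)) as [N HN].
    assert (HN0 : 0 < INR N) by (pose proof (Rinv_0_lt_compat eps (cond_pos eps)); lra).
    exists N. intros n Hn u Hu.
    pose proof (trigamma_series_tail u n Hu) as Htail.
    change (real (Lim_seq (fun k => trigamma_sum u k))) with (trigamma_series u).
    assert (HNn : INR N <= INR n) by (apply le_INR; lia).
    assert (Hun : / (u + INR n) <= / INR N) by (apply Rinv_le_contravar; lra).
    assert (HNe : / INR N < eps).
    { rewrite <- (Rinv_inv eps). apply Rinv_lt_contravar; [|exact HN].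
      apply Rmult_lt_0_compat; [apply Rinv_0_lt_compat, cond_pos | exact HN0]. }
    rewrite Rabs_left1; lra.
  - intros n u Hu. apply continuity_pt_filterlim, trigamma_sum_continuous, Hu.
Qed.

Lemma harm2_add_trigamma_sum m N : harm2 m + trigamma_sum (INR m + 1) N = harm2 (m + S N).
Proof.
  induction N as [|N IH].
  - rewrite Nat.add_1_r, harm2_S. unfold trigamma_sum. simpl sum_f_R0.
    rewrite Rplus_0_r. reflexivity.
  - rewrite trigamma_sum_S, <- Rplus_assoc, IH.
    replace (m + S (S N))%nat with (S (m + S N)) by lia. rewrite harm2_S.
    replace (INR (m + S N) + 1) with (INR m + 1 + INR (S N)) by (rewrite plus_INR; ring).
    reflexivity.
Qed.

Lemma trigamma_series_nat m : trigamma_series (INR m + 1) = PI ^ 2 / 6 - harm2 m.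
Proof.
  assert (H1 : is_lim_seq (fun N => harm2 m + trigamma_sum (INR m + 1) N)
                          (harm2 m + trigamma_series (INR m + 1))).
  { apply is_lim_seq_plus'; [apply is_lim_seq_const | apply is_lim_seq_trigamma_sum].
    pose proof (pos_INR m). lra. }
  assert (H2 : is_lim_seq (fun N => harm2 m + trigamma_sum (INR m + 1) N) (PI ^ 2 / 6)).
  { apply (is_lim_seq_ext (fun N => harm2 (N + S m))).
    - intros N. rewrite harm2_add_trigamma_sum. f_equal. lia.
    - apply is_lim_seq_incr_n, is_lim_seq_harm2. }
  pose proof (is_lim_seq_unique _ _ H1) as E1. rewrite (is_lim_seq_unique _ _ H2) in E1.
  injection E1. lra.
Qed.

(** * Iterated primitives *)

Definition iter_primitive (g : R -> R) (c x : R) : R := RInt (fun u => (x - u) * g u) c x.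

Section IterPrimitive.

Variable g : R -> R.
Hypothesis g_cont : forall u, 0 < u -> continuous g u.

Lemma iter_primitive_split c y : 0 < c -> 0 < y ->
  iter_primitive g c y = y * RInt g c y - RInt (fun u => u * g u) c y.
Proof.
  intros Hc Hy.
  assert (Hcont : forall h : R -> R, (forall u, 0 < u -> continuous h u) ->
                  is_RInt h c y (RInt h c y)).
  { intros h Hh. apply is_RInt_continuous_R. intros u Hu.
    apply Hh, (segment_pos c y u Hc Hy Hu). }
  apply is_RInt_unique.
  apply (is_RInt_ext_R (fun u => y * g u + -1 * (u * g u))); [intros u _; ring|].
  replace (y * RInt g c y - RInt (fun u => u * g u) c y)
    with (y * RInt g c y + -1 * RInt (fun u => u * g u) c y) by ring.
  apply is_RInt_lin; apply Hcont; [exact g_cont|].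
  intros u Hu. apply continuous_mult_R; [apply continuous_id | apply g_cont, Hu].
Qed.

Lemma is_derive_iter_primitive c y : 0 < c -> 0 < y ->
  is_derive (iter_primitive g c) y (RInt g c y).
Proof.
  intros Hc Hy.
  apply (is_derive_ext_loc (fun y => y * RInt g c y - RInt (fun u => u * g u) c y)).
  - apply (locally_R y y Hy). intros b Hb. apply Rabs_def2 in Hb.
    symmetry. apply iter_primitive_split; lra.
  - assert (HA := is_derive_RInt_pos g c y Hc Hy g_cont).
    assert (HB := is_derive_RInt_pos (fun u => u * g u) c y Hc Hy
      (fun u Hu => continuous_mult_R _ _ u (continuous_id u) (g_cont u Hu))).
    assert (HM := is_derive_mult_R (fun y => y) (fun y => RInt g c y) y 1 (g y)
      ltac:(auto_derive; auto) HA).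
    replace (RInt g c y) with (1 * RInt g c y + y * g y - y * g y) by ring.
    exact (is_derive_minus _ _ _ _ _ HM HB).
Qed.

End IterPrimitive.

Lemma iter_primitive_approx (g1 g2 : R -> R) c x e :
  ex_RInt (fun u => (x - u) * g1 u) c x -> ex_RInt (fun u => (x - u) * g2 u) c x ->
  (forall u, Rmin c x <= u <= Rmax c x -> Rabs (g1 u - g2 u) <= e) ->
  Rabs (iter_primitive g1 c x - iter_primitive g2 c x) <= Rabs (x - c) * (Rabs (x - c) * e).
Proof.
  intros H1 H2 He. unfold iter_primitive.
  rewrite <- minus_R, <- (RInt_minus (V := R_CompleteNormedModule)) by assumption.
  apply abs_RInt_le_segment; [apply (ex_RInt_minus (V := R_CompleteNormedModule)); assumption|].
  intros u Hu. rewrite minus_R.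
  replace ((x - u) * g1 u - (x - u) * g2 u) with ((x - u) * (g1 u - g2 u)) by ring.
  rewrite Rabs_mult. apply Rmult_le_compat; try apply Rabs_pos; [|apply He, Hu].
  destruct (Rle_dec c x);
    [rewrite Rmin_left, Rmax_right in Hu by lra | rewrite Rmin_right, Rmax_left in Hu by lra];
    split_Rabs; lra.
Qed.

Lemma is_RInt_linear_over_square c x a : 0 < c -> 0 < x -> 0 <= a ->
  is_RInt (fun u => (x - u) * / (u + a) ^ 2) c x (ln (c + a) - ln (x + a) + (x - c) / (c + a)).
Proof.
  intros Hc Hx Ha.
  replace (ln (c + a) - ln (x + a) + (x - c) / (c + a))
    with ((- (x - x) / (x + a) - ln (x + a)) - (- (x - c) / (c + a) - ln (c + a)))
    by (field; lra).
  apply (is_RInt_derive_R (fun u => - (x - u) / (u + a) - ln (u + a))); intros u Hu;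
    pose proof (segment_pos c x u Hc Hx Hu).
  - auto_derive; [repeat split; lra|]. field. lra.
  - continuity_by_derive. rewrite Rmult_1_r. apply Rmult_integral_contrapositive. split; lra.
Qed.

Lemma iter_primitive_trigamma_sum c x N : 0 < c -> 0 < x ->
  iter_primitive (fun u => trigamma_sum u N) c x
  = sum_f_R0 (fun k => ln (c + INR k) - ln (x + INR k) + (x - c) / (c + INR k)) N.
Proof.
  intros Hc Hx. apply is_RInt_unique.
  induction N as [|N IH].
  - apply is_RInt_linear_over_square; [exact Hc | exact Hx | apply pos_INR].
  - rewrite tech5.
    apply (is_RInt_ext_R (fun u => (x - u) * trigamma_sum u N + (x - u) * / (u + INR (S N)) ^ 2));
      [intros u _; rewrite trigamma_sum_S; ring|].
    apply is_RInt_plus_R; [exact IH|].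
    apply is_RInt_linear_over_square; [exact Hc | exact Hx | apply pos_INR].
Qed.

Lemma is_lim_seq_iter_primitive_trigamma_sum x : 1 < x ->
  is_lim_seq (fun n => iter_primitive (fun u => trigamma_sum u (S n)) 2 x)
    (iter_primitive trigamma_series 2 x).
Proof.
  intros Hx. apply (is_lim_seq_rate _ _ (Rabs (x - 2) * Rabs (x - 2))). intros n.
  assert (Hex : forall g, (forall u, 0 < u -> continuous g u) ->
                ex_RInt (fun u => (x - u) * g u) 2 x).
  { intros g Hg. apply (ex_RInt_continuous (V := R_CompleteNormedModule)). intros u Hu.
    apply continuous_mult_R; [continuity_by_derive; exact I | apply Hg, (segment_pos 2 x u); lra]. }
  replace (Rabs (x - 2) * Rabs (x - 2) / (INR n + 1))
    with (Rabs (x - 2) * (Rabs (x - 2) * / (INR n + 1))) by (unfold Rdiv; ring).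
  apply iter_primitive_approx.
  - apply Hex. intros u Hu. apply trigamma_sum_continuous, Hu.
  - apply Hex. apply trigamma_series_continuous.
  - intros u Hu.
    assert (Hu1 : 1 <= u) by (pose proof (Rmin_glb 2 x 1); pose proof (Rmin_l 2 x); lra).
    pose proof (trigamma_series_tail u (S n) ltac:(lra)).
    rewrite Rabs_minus_sym, Rabs_pos_eq by lra.
    apply Rle_trans with (/ (u + INR (S n))); [lra|].
    rewrite S_INR. apply Rinv_le_contravar; pose proof (pos_INR n); lra.
Qed.

(** * The second derivative of [ln Gamma] *)

Lemma ln_gauss_seq_sub_iter_primitive x N : 1 < x -> (1 <= N)%nat ->
  ln (gauss_seq x N) - iter_primitive (fun u => trigamma_sum u N) 2 x
  = (2 * ln (INR N) + ln (INR (fact N)) - sum_f_R0 (fun k => ln (2 + INR k)) N)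
    + (ln (INR N) - sum_f_R0 (fun k => / (2 + INR k)) N) * (x - 2).
Proof.
  intros Hx HN. rewrite ln_gauss_seq, iter_primitive_trigamma_sum by (assumption || lra).
  unfold Rdiv. rewrite sum_f_R0_lin. ring.
Qed.

Lemma ln_Gamma_iter_primitive : exists a b, forall y, 1 < y ->
  ln (Gamma y) = iter_primitive trigamma_series 2 y + (a + b * y).
Proof.
  set (W := fun y => ln (Gamma y) - iter_primitive trigamma_series 2 y).
  set (A := fun n => 2 * ln (INR (S n)) + ln (INR (fact (S n)))
                     - sum_f_R0 (fun k => ln (2 + INR k)) (S n)).
  set (B := fun n => ln (INR (S n)) - sum_f_R0 (fun k => / (2 + INR k)) (S n)).
  assert (HW : forall y, 1 < y -> is_lim_seq (fun n => A n + B n * (y - 2)) (W y)).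
  { intros y Hy.
    apply (is_lim_seq_ext (fun n => ln (gauss_seq y (S n))
                                    - iter_primitive (fun u => trigamma_sum u (S n)) 2 y)).
    - intros n. apply ln_gauss_seq_sub_iter_primitive; [exact Hy | lia].
    - apply is_lim_seq_minus';
        [apply is_lim_seq_ln_gauss_seq | apply is_lim_seq_iter_primitive_trigamma_sum]; exact Hy. }
  exists (W 2 - 2 * (W 3 - W 2)), (W 3 - W 2). intros y Hy.
  replace 3 with (2 + 1) by ring.
  pose proof (is_lim_seq_affine A B W 2 y (HW 2 ltac:(lra)) (HW (2 + 1) ltac:(lra)) (HW y Hy)).
  unfold W in *. lra.
Qed.

Lemma trigamma_eq_series x : 1 < x -> trigamma x = trigamma_series x.
Proof.
  intros Hx. destruct ln_Gamma_iter_primitive as [a [b Hab]].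
  assert (HS : forall u, 0 < u -> continuous trigamma_series u) by exact trigamma_series_continuous.
  assert (Hd1 : forall y, 1 < y ->
            is_derive (fun y => ln (Gamma y)) y (RInt trigamma_series 2 y + b)).
  { intros y Hy.
    apply (is_derive_ext_loc (fun y => iter_primitive trigamma_series 2 y + (a + b * y))).
    - apply (locally_R y (y - 1)); [lra|]. intros z Hz. apply Rabs_def2 in Hz.
      symmetry. apply Hab. lra.
    - apply is_derive_plus_R; [apply is_derive_iter_primitive; [exact HS | lra | lra]|].
      auto_derive; auto. ring. }
  unfold trigamma. simpl Derive_n.
  rewrite (Derive_ext_loc _ (fun y => RInt trigamma_series 2 y + b)).
  - apply is_derive_unique.
    replace (trigamma_series x) with (trigamma_series x + 0) by ring.
    apply is_derive_plus_R; [apply is_derive_RInt_pos; [lra | lra | exact HS]|].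
    auto_derive; auto.
  - apply (locally_R x (x - 1)); [lra|]. intros z Hz. apply Rabs_def2 in Hz.
    apply is_derive_unique, Hd1. lra.
Qed.

Theorem mainTheorem8 (n : nat) (hn : (1 <= n)%nat) :
  sum_f_R0 (fun k : nat =>
      (-1) ^ (n + k) * ((2 * INR n + 1) * (2 * INR k + 1))
      / ((INR n - INR k) ^ 2 * (INR n + INR k + 1) ^ 2)) (n - 1)
  = - PI ^ 2 / 12 + trigamma (2 * INR n + 1) - / 2 * trigamma (INR n + 1).
Proof.
  rewrite finite_sum_alt_harm2, alt_harm2_double by exact hn.
  assert (Hn : 1 <= INR n) by (apply (le_INR 1), hn).
  rewrite !trigamma_eq_series by lra.
  replace (2 * INR n + 1) with (INR (2 * n) + 1) by (rewrite mult_INR; reflexivity).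
  rewrite !trigamma_series_nat. field.
Qed.
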